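(* Let $K\ge1$, $\alpha\in(0,1]$ and $\gamma\in(0,1]$. For $i\in[K]$ let $F_i$ be an arbitrary nonnegative random variable and $E_i$ a nonnegative random variable such that $\mathbb E[E_i]\le1$ whenever the $i$-th null hypothesis is true; the $F_i$ and $E_i$ may be arbitrarily dependent. For each $i$, draw $T_i$ such that conditionally on all $F_j,E_j$, $T_i\sim\mathrm{Bern}((1-\gamma F_i^{-1})_+)$, and set $\tilde E_i := (1-T_i)F_i + T_i(1-\gamma)E_i$. Let $\mathcal R^{\mathrm{acteBH}}$ be the output of the e-BH procedure at level $\alpha$ applied to $(\tilde E_1,\dots,\tilde E_K)$. Then $\mathrm{FDR}(\mathcal R^{\mathrm{acteBH}})\le\alpha$.
   Context: e-BH at level $\alpha$: with $E_{[i]}$ the $i$-th largest input e-value, $k^{\mathrm{eBH}}=\max\{i\in[K]: E_{[i]}\ge K/(\alpha i)\}$ and the rejection set is $\{i: E_i\ge K/(\alpha k^{\mathrm{eBH}})\}$ (empty if no such $i$). $\mathrm{FDR}(\mathcal R)=\mathbb E\big[|\mathcal N\cap\mathcal R|/(|\mathcal R|\vee1)\big]$ where $\mathcal N$ is the set of true nulls. $x_+=\max(x,0)$; $(1-\gamma F^{-1})_+=0$ when $F=0$. *)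

From HB Require Import structures.
From mathcomp Require Import all_boot all_order all_algebra.
From mathcomp Require Import all_classical all_reals all_analysis.
Set Implicit Arguments. Unset Strict Implicit. Unset Printing Implicit Defensive.
Import Order.TTheory GRing.Theory Num.Theory.
Local Open Scope classical_set_scope.
Local Open Scope ring_scope.

Section Defs.
Variable R : realType.

(* E_[i]: the i-th largest of the e-values (1-based), via sorting decreasingly *)
Definition ord_stat (K : nat) (e : 'I_K -> R) (i : nat) : R :=
  nth 0 (sort (fun x y : R => y <= x) [seq e j | j <- enum 'I_K]) i.-1.

(* k^eBH = max{ i in [K] : E_[i] >= K/(alpha i) }, 0 if no such i *)
Definition ebh_k (K : nat) (alpha : R) (e : 'I_K -> R) : nat :=
  \max_(i < K.+1 | (0 < i)%N && (K%:R / (alpha * i%:R) <= ord_stat e i)) (i : nat).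

Definition ebh (K : nat) (alpha : R) (e : 'I_K -> R) : {set 'I_K} :=
  [set j | (0 < ebh_k alpha e)%N && (K%:R / (alpha * (ebh_k alpha e)%:R) <= e j)].

Definition fdp (K : nat) (N Rej : {set 'I_K}) : R :=
  #|N :&: Rej|%:R / (maxn #|Rej| 1)%:R.

(* (1 - gamma F^{-1})_+, with the convention that it is 0 when F = 0 *)
Definition bern_prob (gamma f : R) : R :=
  if f == 0 then 0 else Num.max (1 - gamma / f) 0.

End Defs.

Definition gen_FE (d : measure_display) (T : measurableType d) (R : realType)
    (K : nat) (F E : 'I_K -> T -> R) : set (set T) :=
  <<s [set A | exists (j : 'I_K) (B : set R), measurable B /\
                 (A = F j @^-1` B \/ A = E j @^-1` B)] >>.
Arguments fdp {R K}.

(* e-BH controls the false discovery proportion pointwise: every rejected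
   e-value is at least K/(alpha k) and at least k hypotheses are rejected, so
   FDP <= (alpha/K) * sum_{i in N} E_i for any nonnegative e-values.  It thus
   suffices that each active e-value ~E_i of a true null has mean at most 1.
   Its second term has mean at most (1 - gamma) E[E_i] <= 1 - gamma, and since
   T_i is Bernoulli(p_i) given the F_j and E_j, with p_i = (1 - gamma/F_i)_+,
   the first has mean E[(1 - p_i) F_i] <= gamma. *)

From HB Require Import structures.
From mathcomp Require Import all_boot all_order all_algebra.
From mathcomp Require Import all_classical all_reals all_analysis.
From mathcomp Require Import measurable_realfun ring.
Import Order.TTheory GRing.Theory Num.Theory.
Import HBNNSimple.
Local Open Scope classical_set_scope.
Local Open Scope ring_scope.

Section EBH.
Variable R : realType.

Lemma card_set_count (n : nat) (p : pred 'I_n) :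
  #|[set j | p j]%SET| = count p (enum 'I_n).
Proof.
rewrite cardsE cardE -size_filter /enum_mem -filter_predI.
by congr size; apply: eq_filter => j /=; rewrite andbT.
Qed.

Lemma sorted_ge_count (s : seq R) (t : R) (k : nat) :
  sorted >=%R s -> (k <= size s)%N -> t <= nth 0 s k.-1 ->
  (k <= count (>= t) s)%N.
Proof.
case: k => [//|k] s_sorted ks t_le.
have ge_trans : transitive (>=%R : rel R) by move=> ? ? ? /[swap]; exact: le_trans.
have take_ge : all (>= t) (take k.+1 s).
  apply/(all_nthP 0) => j; rewrite size_takel // => jk.
  rewrite nth_take //; apply: le_trans t_le _.
  by apply: (sorted_leq_nth ge_trans lexx) => //; rewrite inE (leq_trans jk).
move: take_ge; rewrite all_count => /eqP take_count.
by rewrite -(cat_take_drop k.+1 s) count_cat take_count size_takel // leq_addr.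
Qed.

Lemma ebh_k_spec {K : nat} {alpha : R} {e : 'I_K -> R} :
  (0 < ebh_k alpha e)%N ->
  (ebh_k alpha e <= K)%N /\
  K%:R / (alpha * (ebh_k alpha e)%:R) <= ord_stat e (ebh_k alpha e).
Proof.
pose ok := [pred i : 'I_K.+1 | (0 < i)%N && (K%:R / (alpha * i%:R) <= ord_stat e i)].
have -> : ebh_k alpha e = \max_(i in ok) i by [].
have [ok0|] := posnP #|ok|; first by rewrite big_pred0 // => i; rewrite (card0_eq ok0).
move=> /(eq_bigmax_cond (fun i : 'I_K.+1 => i : nat)) [i Pi ->] _.
by case/andP: Pi => _ thr; rewrite -ltnS.
Qed.

Lemma ebh_k_le_card {K : nat} (alpha : R) (e : 'I_K -> R) :
  (ebh_k alpha e <= #|ebh alpha e|)%N.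
Proof.
have [->//|k_gt0] := posnP (ebh_k alpha e).
have [kK thr] := ebh_k_spec k_gt0.
rewrite /ebh; under eq_finset do rewrite k_gt0 /=.
rewrite card_set_count -(count_map e (>= _)) -(count_sort >=%R).
apply: sorted_ge_count thr.
- by apply: sort_sorted => x y; exact: le_total.
- by rewrite size_sort size_map size_enum_ord.
Qed.

Lemma fdp_ebh_le {K : nat} (alpha : R) (e : 'I_K -> R) (N : {set 'I_K}) :
  0 < alpha -> (0 < K)%N -> (forall j, 0 <= e j) ->
  fdp N (ebh alpha e) <= alpha / K%:R * \sum_(j in N) e j.
Proof.
move=> alpha_gt0 K_gt0 e_ge0.
have aK_ge0 : 0 <= alpha / K%:R by rewrite divr_ge0 ?ler0n ?ltW.
have [k0|k_gt0] := posnP (ebh_k alpha e).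
  have -> : ebh alpha e = finset.set0 by apply/setP => j; rewrite !inE k0.
  by rewrite /fdp finset.setI0 cards0 mul0r mulr_ge0 ?sumr_ge0.
set Rej := ebh alpha e; set k := ebh_k alpha e in k_gt0 *.
have fdp_le : fdp N Rej <= #|N :&: Rej|%:R / k%:R :> R.
  have k_le : (k <= maxn #|Rej| 1)%N.
    by rewrite (leq_trans (ebh_k_le_card alpha e)) ?leq_maxl.
  rewrite /fdp; apply: ler_wpM2l; first exact: ler0n.
  by rewrite lef_pV2 ?posrE ?ltr0n ?ler_nat // (leq_trans k_gt0).
have rej_ge j : j \in Rej -> k%:R^-1 <= alpha / K%:R * e j.
  rewrite inE => /andP[_ thr].
  have -> : k%:R^-1 = alpha / K%:R * (K%:R / (alpha * k%:R)) :> R.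
    by field; rewrite !pnatr_eq0 -!lt0n K_gt0 k_gt0 gt_eqF.
  exact: ler_wpM2l.
apply: (le_trans fdp_le).
have -> : #|N :&: Rej|%:R / k%:R = \sum_(j in N :&: Rej) k%:R^-1 :> R.
  by rewrite sumr_const mulr_natl.
rewrite mulr_sumr big_mkcond [leRHS]big_mkcond /=.
apply: ler_sum => j _; rewrite finset.in_setI.
case: (j \in N) => //=.
by case: ifP => [/rej_ge|_] //; rewrite mulr_ge0.
Qed.

End EBH.

Section BernProb.
Context {R : realType} {gamma : R}.
Hypothesis gamma_gt0 : 0 < gamma.

Lemma bern_prob_ge0 y : 0 <= bern_prob gamma y.
Proof. by rewrite /bern_prob; case: ifP => // _; rewrite le_max lexx orbT. Qed.

Lemma bern_prob_le1 y : 0 <= y -> bern_prob gamma y <= 1.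
Proof.
rewrite le0r /bern_prob => /predU1P[->|y_gt0]; first by rewrite eqxx.
by rewrite gt_eqF // ge_max ler01 andbT gerBl divr_ge0 ?ltW.
Qed.

Lemma bern_prob_complM_le y : 0 <= y -> (1 - bern_prob gamma y) * y <= gamma.
Proof.
rewrite le0r /bern_prob => /predU1P[->|y_gt0]; first by rewrite mulr0 ltW.
rewrite gt_eqF //; have [|_] := leP (1 - gamma / y) 0.
  by rewrite subr0 mul1r subr_le0 ler_pdivlMr // mul1r.
by rewrite opprB addrC subrK mulrVK ?unitfE ?gt_eqF.
Qed.

Lemma nondecreasing_bern_prob_max0 :
  {homo (fun y => bern_prob gamma (Num.max y 0)) : a b / a <= b}.
Proof.
move=> a b ab /=; rewrite {1}/bern_prob.
case: eqP => [_|/eqP a_neq0]; first exact: bern_prob_ge0.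
have a_gt0 : 0 < Num.max a 0 by rewrite lt_def a_neq0 le_max lexx orbT.
have ab' : Num.max a 0 <= Num.max b 0 by rewrite ge_max !le_max ab lexx !orbT.
have b_gt0 := lt_le_trans a_gt0 ab'.
rewrite /bern_prob gt_eqF // ge_max [X in _ && X]le_max lexx orbT andbT le_max.
by rewrite lerD2l lerN2 ler_pM2l // lef_pV2 ?posrE // ab'.
Qed.

End BernProb.

Section Staircase.
Context {R : realType}.

Definition staircase (delta : R) (M : nat) (y : R) : R :=
  \sum_(k < M) delta * ((k%:R * delta <= y)%R)%:R.

Lemma staircase_ge0 (delta y : R) M :
  0 <= delta -> 0 <= staircase delta M y.
Proof. by move=> delta_ge0; apply: sumr_ge0 => k _; rewrite mulr_ge0. Qed.

Lemma staircase_bounds {delta y : R} M :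
  0 <= y -> 0 < delta ->
  Num.min y (M%:R * delta) <= staircase delta M y <= y + delta.
Proof.
move=> y_ge0 delta_gt0; rewrite /staircase.
have full m : m%:R * delta <= y ->
    \sum_(k < m) delta * ((k%:R * delta <= y)%R)%:R = m%:R * delta.
  move=> my; transitivity (\sum_(k < m) delta).
    by apply: eq_bigr => k _; rewrite (le_trans _ my) ?mulr1 // ler_pM2r // ler_nat ltnW.
  by rewrite sumr_const card_ord mulr_natl.
elim: M => [|M IH].
  by rewrite big_ord0 mul0r ge_min lexx orbT /= addr_ge0 // ltW.
rewrite big_ord_recr /=; have [My|My] := leP (M%:R * delta) y.
  by rewrite full // mulr1 -natr1 mulrDl mul1r ge_min lexx orbT lerD2r.
rewrite mulr0 addr0; case/andP: IH => IH1 ->; rewrite andbT.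
by apply: le_trans IH1; rewrite le_min !ge_min lexx /= (ltW My).
Qed.

Lemma staircase_indic (aT : Type) (f : aT -> R) (delta : R) M x :
  staircase delta M (f x) =
  (\sum_(k < M) delta * \1_(f @^-1` `[k%:R * delta, +oo[) x)%R.
Proof.
apply: eq_bigr => k _; rewrite indicE.
suff -> : (x \in f @^-1` `[k%:R * delta, +oo[) = (k%:R * delta <= f x) by [].
by apply/idP/idP; rewrite in_setE /= in_itv /= andbT.
Qed.

End Staircase.

Lemma finite_range_ub {aT : Type} {R : realDomainType} {h : aT -> R} :
  finite_set (range h) -> exists c : R, forall x, h x <= c.
Proof.
move=> /finite_fsetP [X rangeE].
exists (\big[Num.max/0]_(y <- finmap.enum_fset X) y) => x.
have hxX : h x \in finmap.enum_fset X.
  have : range h (h x) by exists x.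
  by rewrite rangeE.
exact: le_bigmax_seq hxX _.
Qed.

Lemma in_setb (aT : Type) (b : pred aT) x : (x \in [set y | b y]) = b x.
Proof. by apply/idP/idP; rewrite in_setE. Qed.

Section IntegralLemmas.
Local Open Scope ereal_scope.
Context {d : measure_display} {T : measurableType d} {R : realType}.
Context {mu : {measure set T -> \bar R}}.

(* The integral of a nonnegative function is a supremum over its simple
   minorants, so monotonicity needs no measurability. *)
Lemma ge0_le_integral_nonmeasurable {f g : T -> \bar R} :
  (forall x, 0 <= f x) -> (forall x, f x <= g x) ->
  \int[mu]_x f x <= \int[mu]_x g x.
Proof.
move=> f_ge0 fg; have g_ge0 x : 0 <= g x := le_trans (f_ge0 x) (fg x).
rewrite !ge0_integralTE //; apply: ereal_sup_le => _ [h hf <-].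
by exists h => // x; exact: le_trans (hf x) (fg x).
Qed.

Lemma integral_mul_sum_indic (g : T -> R) (M : nat) (c : R) (A : 'I_M -> set T) :
  measurable_fun setT g -> (forall x, 0 <= g x)%R -> (0 <= c)%R ->
  (forall k, measurable (A k)) ->
  \int[mu]_x (g x * \sum_(k < M) c * \1_(A k) x)%:E =
  \sum_(k < M) c%:E * \int[mu]_x (g x * \1_(A k) x)%:E.
Proof.
move=> mg g_ge0 c_ge0 mA.
have mgA k : measurable_fun setT (fun x => g x * \1_(A k) x)%R.
  by apply: measurable_funM mg _; exact: measurable_indic.
have gA_ge0 k x : (0 <= g x * \1_(A k) x)%R by rewrite mulr_ge0.
transitivity (\int[mu]_x \sum_(k < M) (c * (g x * \1_(A k) x))%:E).
  apply: eq_integral => x _; rewrite sumEFin mulr_sumr; congr EFin.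
  by apply: eq_bigr => k _; rewrite mulrCA.
rewrite ge0_integral_sum //.
- apply: eq_bigr => k _; rewrite -ge0_integralZl_EFin //.
    by move=> x _; rewrite lee_fin.
  exact/measurable_EFinP.
- move=> k; apply/measurable_EFinP.
  exact: measurable_funM (measurable_cst _) (mgA k).
- by move=> k x _; rewrite lee_fin mulr_ge0.
Qed.

End IntegralLemmas.

Section ActiveEValues.
Local Open Scope ereal_scope.
Context {d : measure_display} {T : measurableType d} {R : realType}.
Context {P : probability T R} {K : nat} {gamma : R}.
Context {F E : 'I_K -> T -> R} {Tb : 'I_K -> T -> bool}.
Hypothesis gamma_gt0 : (0 < gamma)%R.
Hypothesis gamma_le1 : (gamma <= 1)%R.
Hypothesis mF : forall i, measurable_fun setT (F i).
Hypothesis mE : forall i, measurable_fun setT (E i).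
Hypothesis F_ge0 : forall i x, (0 <= F i x)%R.
Hypothesis E_ge0 : forall i x, (0 <= E i x)%R.
Hypothesis mTb : forall i, measurable [set x | Tb i x].
Hypothesis Tb_cond : forall i A, gen_FE F E A ->
  P (A `&` [set x | Tb i x]) = \int[P]_(x in A) (bern_prob gamma (F i x))%:E.

Definition TbR i x : R := (Tb i x)%:R.
Definition pF i x : R := bern_prob gamma (F i x).
Definition etilde i x : R :=
  (1 - TbR i x) * F i x + TbR i x * (1 - gamma) * E i x.

Lemma gen_FE_measurable {A} : gen_FE F E A -> measurable A.
Proof.
apply: smallest_sub; first exact: sigma_algebra_measurable.
move=> _ [j [B [mB [->|->]]]]; rewrite -[X in measurable X]setTI.
- exact: mF.
- exact: mE.
Qed.

Lemma gen_FE_F_ge i c : gen_FE F E (F i @^-1` `[c, +oo[%classic).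
Proof.
apply: sub_sigma_algebra; exists i, `[c, +oo[%classic.
by split; [exact: measurable_itv|left].
Qed.

Lemma measurable_TbR i : measurable_fun setT (TbR i).
Proof.
have -> : TbR i = \1_[set x | Tb i x].
  by apply/funext => x; rewrite indicE in_setb.
exact: measurable_indic.
Qed.

Lemma measurable_pF i : measurable_fun setT (pF i).
Proof.
have -> : pF i = (fun y => bern_prob gamma (Num.max y 0%R)) \o F i.
  by apply/funext => x; rewrite /pF /= max_l.
apply: measurableT_comp (mF i).
exact: nondecreasing_measurable measurableT (nondecreasing_bern_prob_max0 gamma_gt0).
Qed.

Lemma TbR_ge0 i x : (0 <= TbR i x)%R.
Proof. exact: ler0n. Qed.

Lemma oneBTbR_ge0 i x : (0 <= 1 - TbR i x)%R.
Proof. by rewrite /TbR; case: (Tb i x); rewrite ?subrr ?subr0. Qed.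

Lemma oneBpF_ge0 i x : (0 <= 1 - pF i x)%R.
Proof. by rewrite subr_ge0 bern_prob_le1. Qed.

Lemma integral_oneBTbR_indic i A : gen_FE F E A ->
  \int[P]_x ((1 - TbR i x) * \1_A x)%:E = \int[P]_x ((1 - pF i x) * \1_A x)%:E.
Proof.
(* Both sides equal P A - P (A `&` [set x | Tb i x]). *)
move=> gA; have mA := gen_FE_measurable gA.
have lhsE : \int[P]_x ((1 - TbR i x) * \1_A x)%:E = P (A `\` [set x | Tb i x]).
  rewrite -(setIT (A `\` _)) -integral_indic //; last exact: measurableD.
  apply: eq_integral => x _; rewrite !indicE in_setD in_setb /TbR.
  by case: (Tb i x); case: (x \in A); rewrite /= ?subrr ?mul0r ?subr0 ?mul1r.
have rhsE : \int[P]_x ((1 - pF i x) * \1_A x)%:E = \int[P]_(x in A) (1 - pF i x)%:E.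
  rewrite [RHS]integral_mkcond; apply: eq_integral => x _; rewrite patchE indicE.
  by case: (x \in A); rewrite /= ?mulr1 ?mulr0.
have mpF : measurable_fun A (EFin \o pF i).
  by apply/measurable_EFinP; apply: measurable_funS (measurable_pF i).
have PA_split : P A = \int[P]_(x in A) (1 - pF i x)%:E + \int[P]_(x in A) (pF i x)%:E.
  rewrite -ge0_integralD //.
  - rewrite -[LHS]mul1e -integral_cst //.
    by apply: eq_integral => x _; rewrite -EFinD subrK.
  - by move=> x _; rewrite lee_fin oneBpF_ge0.
  - apply/measurable_EFinP; apply: measurable_funS (_ : measurable_fun setT _) => //.
    exact: measurable_funB (measurable_cst _) (measurable_pF i).
  - by move=> x _; rewrite lee_fin bern_prob_ge0.
have pF_fin : \int[P]_(x in A) (pF i x)%:E \is a fin_num.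
  by rewrite -(Tb_cond i A gA) fin_num_measure //; exact: measurableI.
have PA_decomp : P A = P (A `\` [set x | Tb i x]) + \int[P]_(x in A) (pF i x)%:E.
  by rewrite -(Tb_cond i A gA); exact: measureDI.
move: PA_decomp; rewrite PA_split lhsE rhsE.
by move=> /(congr1 (fun z => z - \int[P]_(x in A) (pF i x)%:E)); rewrite !addeK.
Qed.

Lemma integral_oneBTbR_staircase i delta M : (0 <= delta)%R ->
  \int[P]_x ((1 - TbR i x) * staircase delta M (F i x))%:E =
  \int[P]_x ((1 - pF i x) * staircase delta M (F i x))%:E.
Proof.
move=> delta_ge0; under eq_integral do rewrite staircase_indic.
under [RHS]eq_integral do rewrite staircase_indic.
have mA k : measurable (F i @^-1` `[(k%:R * delta)%R, +oo[%classic).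
  exact: gen_FE_measurable (gen_FE_F_ge i _).
have m1T : measurable_fun setT (fun x => 1 - TbR i x)%R.
  exact: measurable_funB (measurable_cst _) (measurable_TbR i).
have m1p : measurable_fun setT (fun x => 1 - pF i x)%R.
  exact: measurable_funB (measurable_cst _) (measurable_pF i).
rewrite !integral_mul_sum_indic //; first last.
  by move=> x; exact: oneBTbR_ge0.
  by move=> x; exact: oneBpF_ge0.
apply: eq_bigr => k _; congr (_ * _); exact: integral_oneBTbR_indic (gen_FE_F_ge i _).
Qed.

Lemma integral_oneBTbR_staircase_le i delta M : (0 < delta)%R ->
  \int[P]_x ((1 - TbR i x) * staircase delta M (F i x))%:E <= (gamma + delta)%:E.
Proof.
move=> delta_gt0; rewrite integral_oneBTbR_staircase; last exact: ltW.
have -> : (gamma + delta)%:E = \int[P]_x (gamma + delta)%:E.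
  by rewrite integral_cst // [X in _ * X]probability_setT mule1.
apply: ge0_le_integral_nonmeasurable => x.
  by rewrite lee_fin mulr_ge0 ?oneBpF_ge0 ?staircase_ge0 ?ltW.
have /andP[_ stair_le] := staircase_bounds M (F_ge0 i x) delta_gt0.
rewrite lee_fin (le_trans (ler_wpM2l (oneBpF_ge0 i x) stair_le)) // mulrDr.
apply: lerD; first exact: bern_prob_complM_le.
by rewrite ler_piMl ?(ltW delta_gt0) // lerBlDr lerDl bern_prob_ge0.
Qed.

(* The conditional law of T_i is only available on the sets {F_i >= c}, so
   F_i is approximated by staircases built from them; a simple minorant of
   (1 - T_i) F_i is bounded, hence dominated by a finite staircase. *)
Lemma integral_oneBTbR_F_le i : \int[P]_x ((1 - TbR i x) * F i x)%:E <= gamma%:E.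
Proof.
rewrite ge0_integralTE; last by move=> x; rewrite lee_fin mulr_ge0 ?oneBTbR_ge0.
apply: ge_ereal_sup => _ [h h_le <-]; rewrite -integralT_nnsfun.
have [c h_le_c] := finite_range_ub (fimfunP h).
apply/lee_addgt0Pr => delta delta_gt0; rewrite -EFinD.
pose M := Num.bound (Num.max c 0 / delta)%R.
have c_le_M : (c <= M%:R * delta)%R.
  rewrite -ler_pdivrMr //; apply: ltW; apply: le_lt_trans (archi_boundP _).
    by rewrite ler_pM2r ?invr_gt0 // le_max lexx.
  by apply: divr_ge0; [rewrite le_max lexx orbT | exact: ltW].
apply: le_trans _ (integral_oneBTbR_staircase_le i delta M delta_gt0).
apply: ge0_le_integral_nonmeasurable => x; first by rewrite lee_fin fun_ge0.
move: (h_le x); rewrite /= !lee_fin /TbR; case: (Tb i x) => /=.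
  by rewrite subrr !mul0r.
rewrite subr0 !mul1r => h_le_F.
have /andP[stair_ge _] := staircase_bounds M (F_ge0 i x) delta_gt0.
by apply: le_trans stair_ge; rewrite le_min h_le_F (le_trans (h_le_c x)).
Qed.

Lemma etilde_ge0 i x : (0 <= etilde i x)%R.
Proof.
apply: addr_ge0; first by rewrite mulr_ge0 ?oneBTbR_ge0.
by rewrite !mulr_ge0 ?subr_ge0 ?TbR_ge0.
Qed.

Lemma measurable_etilde i : measurable_fun setT (etilde i).
Proof.
apply: measurable_funD; apply: measurable_funM => //.
- exact: measurable_funB (measurable_cst _) (measurable_TbR i).
- exact: measurable_funM (measurable_TbR i) (measurable_cst _).
Qed.

Lemma integral_etilde_le1 i : \int[P]_x (E i x)%:E <= 1 ->
  \int[P]_x (etilde i x)%:E <= 1.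
Proof.
move=> E_le1.
have TbE_ge0 x : (0 <= TbR i x * (1 - gamma) * E i x)%R.
  by rewrite !mulr_ge0 ?subr_ge0 ?TbR_ge0.
have TbE_le : \int[P]_x (TbR i x * (1 - gamma) * E i x)%:E <= (1 - gamma)%:E.
  apply: le_trans (_ : \int[P]_x ((1 - gamma)%:E * (E i x)%:E) <= _).
    apply: ge0_le_integral_nonmeasurable => x; first by rewrite lee_fin.
    rewrite -EFinM lee_fin ler_wpM2r // /TbR.
    by case: (Tb i x); rewrite ?mul1r ?mul0r ?subr_ge0.
  rewrite ge0_integralZl_EFin ?subr_ge0 //.
  - by rewrite -[leRHS]mule1 lee_wpmul2l // lee_fin subr_ge0.
  - by move=> x _; rewrite lee_fin.
  - exact/measurable_EFinP.
rewrite /etilde; under eq_integral do rewrite EFinD.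
rewrite ge0_integralD //.
- apply: le_trans (leeD (integral_oneBTbR_F_le i) TbE_le) _.
  by rewrite -EFinD addrC subrK.
- by move=> x _; rewrite lee_fin mulr_ge0 ?oneBTbR_ge0.
- apply/measurable_EFinP; apply: measurable_funM (mF i).
  exact: measurable_funB (measurable_cst _) (measurable_TbR i).
- by move=> x _; rewrite lee_fin.
- apply/measurable_EFinP; apply: measurable_funM (mE i).
  exact: measurable_funM (measurable_TbR i) (measurable_cst _).
Qed.

Lemma integral_sum_etilde_le {N : {set 'I_K}} :
  (forall i, i \in N -> \int[P]_x (E i x)%:E <= 1) ->
  \int[P]_x (\sum_(i in N) etilde i x)%:E <= #|N|%:R%:E.
Proof.
move=> E_le1; under eq_integral do rewrite -big_enum -sumEFin.
rewrite ge0_integral_sum //; last 2 first.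
- by move=> i; apply/measurable_EFinP; exact: measurable_etilde.
- by move=> i x _; rewrite lee_fin etilde_ge0.
have -> : (#|N|%:R = \sum_(i <- enum N) 1 :> R)%R by rewrite big_enum sumr_const.
rewrite -sumEFin big_seq [leRHS]big_seq; apply: lee_sum => i; rewrite mem_enum => /E_le1.
exact: integral_etilde_le1.
Qed.

End ActiveEValues.

Arguments etilde {d T R K} gamma F E Tb i x.

Theorem theorem2 (d : measure_display) (T : measurableType d) (R : realType)
  (P : probability T R) (K : nat) (alpha gamma : R)
  (F E : 'I_K -> T -> R) (Tb : 'I_K -> T -> bool) (N : {set 'I_K}) :
  (0 < K)%N ->
  0 < alpha -> alpha <= 1 ->
  0 < gamma -> gamma <= 1 ->
  (forall i, measurable_fun setT (F i)) ->
  (forall i, measurable_fun setT (E i)) ->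
  (forall i x, 0 <= F i x) ->
  (forall i x, 0 <= E i x) ->
  (forall i, i \in N -> (\int[P]_x (E i x)%:E <= 1)%E) ->
  (forall i, measurable [set x | Tb i x]) ->
  (* conditionally on sigma(F_j, E_j : j), T_i ~ Bern((1 - gamma F_i^{-1})_+) *)
  (forall i A, gen_FE F E A ->
     P (A `&` [set x | Tb i x]) = (\int[P]_(x in A) (bern_prob gamma (F i x))%:E)%E) ->
  let Et := fun x i => (1 - (Tb i x)%:R) * F i x + (Tb i x)%:R * (1 - gamma) * E i x in
  (\int[P]_x (fdp N (ebh alpha (Et x)))%:E <= alpha%:E)%E.
Proof.
move=> K_gt0 alpha_gt0 alpha_le1 gamma_gt0 gamma_le1 mF mE F_ge0 E_ge0 E_null mTb Tb_cond.
change (\int[P]_x (fdp N (ebh alpha (etilde gamma F E Tb ^~ x)))%:E <= alpha%:E)%E.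
have fdp_le x : ((fdp N (ebh alpha (etilde gamma F E Tb ^~ x)))%:E <=
    (alpha / K%:R * \sum_(j in N) etilde gamma F E Tb j x)%:E)%E.
  by rewrite lee_fin fdp_ebh_le // => j; exact: etilde_ge0.
apply: le_trans (ge0_le_integral_nonmeasurable _ fdp_le) _.
  by move=> x; rewrite lee_fin /fdp divr_ge0 ?ler0n.
have c_ge0 : 0 <= alpha / K%:R by rewrite divr_ge0 ?ler0n ?ltW.
under eq_integral do rewrite EFinM.
rewrite ge0_integralZl_EFin //; first last.
- apply/measurable_EFinP; under eq_fun do rewrite -big_enum.
  apply: measurable_sum => j.
  exact: measurable_etilde mF mE mTb j.
- by move=> x _; rewrite lee_fin sumr_ge0 // => j _; exact: etilde_ge0.
have sum_le :=
  integral_sum_etilde_le gamma_gt0 gamma_le1 mF mE F_ge0 E_ge0 mTb Tb_cond E_null.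
apply: le_trans (lee_wpmul2l _ sum_le) _; first by rewrite lee_fin.
rewrite -EFinM lee_fin mulrAC ler_pdivrMr ?ltr0n // ler_wpM2l ?(ltW alpha_gt0) //.
by rewrite ler_nat -[X in (_ <= X)%N]card_ord max_card.
Qed.
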